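(* (i) $\mathcal{B}_{\mathbb{D}^m}$ equals the set of $X\in(\mathbb{D}^m)_{nc}$ such that the series $\sum_{l=0}^\infty\big(\sum_{w\in\mathcal{F}_m^{[l]}}f_wX^w\big)$ converges for every sequence $\{f_w\}_{w\in\mathcal{F}_m}\in\ell^2(\mathcal{F}_m)$. (ii) $\mathcal{B}_{\mathbb{B}^m}$ equals the set of $X\in(\mathbb{B}^m)_{nc}$ such that the series $\sum_{l=0}^\infty\big(\sum_{w\in\mathcal{F}_m^{[l]}}f_wX^w\big)$ converges for every sequence $\{f_w\}_{w\in\mathcal{F}_m}\in\ell^2_m(\mathcal{F}_m)$.
   Context: $\mathcal{F}_m$ is the free monoid on $\{1,\dots,m\}$, $\mathcal{F}_m^{[l]}$ the words of length $l$; for $X\in(\mathbb{C}^{N\times N})^m$, $X^w=X_{w_1}\cdots X_{w_t}$, $X^\emptyset=I_N$. For $p>0$, $\ell^2_p(\mathcal{F}_m)$ is the space of complex sequences $\{f_w\}_{w\in\mathcal{F}_m}$ with $\sum_{l\ge0}\sum_{w\in\mathcal{F}_m^{[l]}}p^{-l}|f_w|^2<\infty$, and $\ell^2(\mathcal{F}_m)=\ell^2_1(\mathcal{F}_m)$. $(\mathbb{D}^m)_{nc}=\coprod_N\{X\in(\mathbb{C}^{N\times N})^m:\|X_j\|<1\ \forall j\}$, $(\mathbb{B}^m)_{nc}=\coprod_N\{X:\sum_iX_i^\ast X_i<I_N\}$. Noncommutative functions on $\Omega$ (one of these sets) map level $N$ to $\mathbb{C}^{N\times N}$ and respect direct sums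 and similarities; $\mathcal{A}_\Omega$ consists of those locally bounded on slices separately in every matrix dimension; each $f\in\mathcal{A}_\Omega$ has Taylor--Taylor coefficients $f_w$ at $0$ with $f(X)=\sum_l\sum_{|w|=l}f_wX^w$ on $\Omega$. With $\operatorname{Tr}$ the non-normalized trace, $(\partial(\mathbb{D}^m)_{nc})_N=\mathcal{U}(N)^m$ carrying the product Haar probability $\mu_N$, and $(\partial(\mathbb{B}^m)_{nc})_N=\{X:\sum_iX_i^\ast X_i=I_N\}$ carrying the unique $\mathcal{U}(mN)$-invariant probability $\nu_N$ (action by left multiplication on $[X_1;\dots;X_m]\in\mathbb{C}^{mN\times N}$), $H^2(\Omega)$ is the set of $f\in\mathcal{A}_\Omega$ with $\sup_N\sup_{0<r<1}\int\frac1N\operatorname{Tr}(f(rX)^\ast f(rX))\,d\omega_N<\infty$. It is an inner product space with norm $\|f\|^2=\sum_{w}|f_w|^2$ for the polydisc and $\|f\|^2=\sum_wm^{-|w|}|f_w|^2$ for the ball. For $X\in\Omega\cap(\mathbb{C}^{N\times N})^m$, $E^X_\Omega:H^2(\Omega)\to\mathbb{C}^{N\times N}$ is the evaluation map $f\mapsto f(X)$. $\mathcal{B}_{\Omega,N}$ is the set of $X\in\Omega\cap(\mathbb{C}^{N\times N})^m$ for which $E^X_\Omega$ is bounded, and $\mathcal{B}_{\mathbb{D}^m}=\coprod_N\mathcal{B}_{(\mathbb{D}^m)_{nc},N}$, $\mathcal{B}_{\mathbb{B}^m}=\coprod_N\mathcal{B}_{(\mathbb{B}^m)_{nc},N}$.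 *)

From HB Require Import structures.
From mathcomp Require Import all_boot all_order all_algebra.
From mathcomp Require Import all_classical all_reals all_analysis.
From mathcomp.real_closed Require Import complex.
Set Implicit Arguments. Unset Strict Implicit. Unset Printing Implicit Defensive.
Import Order.TTheory GRing.Theory Num.Theory.
Import numFieldNormedType.Exports.
Local Open Scope classical_set_scope.
Local Open Scope ring_scope.
Local Open Scope complex_scope.

(* level N of (C^{N x N})^m : m-tuples of complex N x N matrices *)
Definition mxt (R : realType) (m N : nat) : Type := {ffun 'I_m -> 'M[R[i]]_N}.
HB.instance Definition _ (R : realType) (m N : nat) := Choice.on (mxt R m N).
HB.instance Definition _ (R : realType) (m N : nat) :=
  isPointed.Build (mxt R m N) 0.

Section Defs.
Variables (R : realType) (m : nat).
Local Notation C := R[i].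
Local Notation mxt N := (mxt R m N).

Definition adj p q (A : 'M[C]_(p, q)) : 'M[C]_(q, p) := (map_mx (fun z => z^*) A)^T.

Definition cnorm2 (z : C) : R := complex.Re z ^+ 2 + complex.Im z ^+ 2.
Definition frob2 p q (A : 'M[C]_(p, q)) : R := \sum_i \sum_j cnorm2 (A i j).

Definition vnorm2 N (v : 'cV[C]_N) : C := \sum_i `|v i 0| ^+ 2.

Definition mono N (X : mxt N) (w : seq 'I_m) : 'M[C]_N :=
  foldr (fun j A => X j *m A) 1%:M w.

Definition hompart N (c : seq 'I_m -> C) (X : mxt N) (l : nat) : 'M[C]_N :=
  \sum_(w : l.-tuple 'I_m) c (tval w) *: mono X (tval w).
Definition psum N (c : seq 'I_m -> C) (X : mxt N) (n : nat) : 'M[C]_N :=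
  \sum_(l < n) hompart c X l.

Definition mx_cvg_to N (S : nat -> 'M[C]_N) (L : 'M[C]_N) : Prop :=
  forall a b, ((fun n => complex.Re (S n a b)) @ \oo --> complex.Re (L a b)) /\
              ((fun n => complex.Im (S n a b)) @ \oo --> complex.Im (L a b)).

Definition wnorm_term (p : R) (c : seq 'I_m -> C) (l : nat) : R :=
  \sum_(w : l.-tuple 'I_m) p ^- l * cnorm2 (c (tval w)).
Definition l2w (p : R) (c : seq 'I_m -> C) : Prop :=
  cvg (series (wnorm_term p c) @ \oo).

Definition ncpolydisc N : set (mxt N) :=
  [set X | forall j, exists k : C, k < 1 /\
     forall v : 'cV[C]_N, vnorm2 (X j *m v) <= k * vnorm2 v].
Arguments ncpolydisc N : clear implicits.
Definition ncball N : set (mxt N) :=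
  [set X | forall v : 'cV[C]_N, v != 0 ->
     0 < (adj v *m (1%:M - \sum_j adj (X j) *m X j) *m v) 0 0].
Arguments ncball N : clear implicits.

Definition torus N : set (mxt N) := [set X | forall j, adj (X j) *m X j = 1%:M].
Arguments torus N : clear implicits.
Definition sphere N : set (mxt N) := [set X | \sum_j adj (X j) *m X j = 1%:M].
Arguments sphere N : clear implicits.

(* Borel sigma-algebra on (C^{N x N})^m : generated by real and imaginary
   parts of the entries *)
Definition gens N : set (set (mxt N)) :=
  [set A | exists j a b (B : set R), measurable B /\
     (A = (fun X : mxt N => complex.Re (X j a b)) @^-1` B \/
      A = (fun X : mxt N => complex.Im (X j a b)) @^-1` B)].
Arguments gens N : clear implicits.
Definition mesT N := g_sigma_algebraType (gens N).
Arguments mesT N : clear implicits.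

(* mu_N : product Haar probability measure on U(N)^m, characterized as the
   probability measure carried by U(N)^m invariant under left multiplication
   by U(N)^m *)
Definition is_torus_haar (mu : forall N, {measure set (mesT N) -> \bar R}) : Prop :=
  forall N, mu N setT = 1%E /\ mu N (torus N) = 1%E /\
    forall U : {ffun 'I_m -> 'M[C]_N}, (forall j, adj (U j) *m U j = 1%:M) ->
    forall A : set (mesT N), measurable A ->
      mu N ((fun X : mesT N => [ffun j => U j *m X j] : mesT N) @^-1` A) = mu N A.

(* nu_N : the U(mN)-invariant probability measure on the sphere; a unitary
   U in C^{mN x mN} is given by its m x m blocks U a b in C^{N x N}, acting on
   [X_1; ...; X_m] by left multiplication *)
Definition is_sphere_inv (nu : forall N, {measure set (mesT N) -> \bar R}) : Prop :=
  forall N, nu N setT = 1%E /\ nu N (sphere N) = 1%E /\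
    forall U : 'I_m -> 'I_m -> 'M[C]_N,
    (forall a b, \sum_k adj (U k a) *m U k b = (a == b)%:R%:M) ->
    forall A : set (mesT N), measurable A ->
      nu N ((fun X : mesT N => [ffun a => \sum_b U a b *m X b] : mesT N) @^-1` A)
        = nu N A.

Definition ncfun (Om : forall N, set (mxt N))
    (f : forall N, mxt N -> 'M[C]_N) : Prop :=
  (forall N M (X : mxt N) (Y : mxt M), Om N X -> Om M Y ->
     f (N + M)%N [ffun j => block_mx (X j) 0 0 (Y j)] =
     block_mx (f N X) 0 0 (f M Y)) /\
  (forall N (X : mxt N) (S : 'M[C]_N), S \in unitmx -> Om N X ->
     Om N [ffun j => S *m X j *m invmx S] ->
     f N [ffun j => S *m X j *m invmx S] = S *m f N X *m invmx S).

Definition locbdd_slices (Om : forall N, set (mxt N))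
    (f : forall N, mxt N -> 'M[C]_N) : Prop :=
  forall N (X Z : mxt N), Om N X -> exists e : R, 0 < e /\ exists K : R,
    forall z : C, `|z| < e%:C -> Om N (X + z *: Z) -> frob2 (f N (X + z *: Z)) <= K.

Definition inA Om f := ncfun Om f /\ locbdd_slices Om f.

Definition TTcoeff (Om : forall N, set (mxt N)) (f : forall N, mxt N -> 'M[C]_N)
    (c : seq 'I_m -> C) : Prop :=
  forall N (X : mxt N), Om N X -> mx_cvg_to (psum c X) (f N X).

Definition scal N (r : R) (X : mxt N) : mxt N := [ffun j => r%:C *: X j].

Definition inH2 (Om : forall N, set (mxt N))
    (om : forall N, {measure set (mesT N) -> \bar R})
    (f : forall N, mxt N -> 'M[C]_N) : Prop :=
  inA Om f /\ exists M : R, forall N, (0 < N)%N -> forall r : R, 0 < r < 1 ->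
    (\int[om N]_(X in setT)
        ((N%:R)^-1 * complex.Re (\tr (adj (f N (scal r X)) *m f N (scal r X))))%:E
      <= M%:E)%E.

(* E^X bounded on H^2(Om), whose norm is ||f||^2 = sum_w p^{-|w|} |f_w|^2 *)
Definition evbdd (Om : forall N, set (mxt N))
    (om : forall N, {measure set (mesT N) -> \bar R}) (p : R) N (X : mxt N) : Prop :=
  exists K : R, forall f c, inH2 Om om f -> TTcoeff Om f c ->
    forall M : R, (forall n, series (wnorm_term p c) n <= M) ->
      frob2 (f N X) <= K * M.

Definition Bset Om om p N (X : mxt N) : Prop := Om N X /\ evbdd Om om p X.

Definition cvg_set (Om : forall N, set (mxt N)) (p : R) N (X : mxt N) : Prop :=
  Om N X /\ forall c, l2w p c -> exists L, mx_cvg_to (psum c X) L.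

End Defs.

(* Both parts are one argument, for a domain Om of tuples of contractions and the weight
   p = 1 (polydisc) or p = m (ball); of the boundary measures only their total mass 1 is used.
   If evaluation at X is bounded, test it on the truncations to degrees [a, b) of the series
   with coefficients c in l^2_p: these polynomials are bounded by a multiple of N on all
   contractive tuples of size N, hence lie in H^2, so the difference of the partial sums of
   orders a and b at X is controlled by the l^2_p norm of c on [a, b), and the partial sums
   are Cauchy.
   Conversely, if the series converges at X for every c in l^2_p, then
   T_l = sum_{|w| = l} p^l |(X^w)_ij|^2 is summable: otherwise the Abel-Dini weights
   u_l = 1 / (1 + T_0 + ... + T_l) give a c in l^2_p whose series diverges at X. Then
   Cauchy-Schwarz bounds |f(X)_ij|^2 by 2 (sum_l T_l) ||f||^2. *)

From mathcomp Require Import all_boot all_order all_algebra.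
From mathcomp Require Import all_classical all_reals all_analysis.
From mathcomp.real_closed Require Import complex.
From mathcomp Require Import ring lra.
Set Implicit Arguments. Unset Strict Implicit. Unset Printing Implicit Defensive.
Import Order.TTheory GRing.Theory Num.Theory.
Import numFieldNormedType.Exports.
Local Open Scope classical_set_scope.
Local Open Scope ring_scope.
Import HBNNSimple.

Section RealSequences.
Variable R : realType.

Lemma sqr_le_of_quadratic_ge0 (A S B : R) :
  0 <= A -> (forall t, 0 <= t ^+ 2 * A - 2 * t * S + B) -> S ^+ 2 <= A * B.
Proof.
move=> A0 quad_ge0; have B0 : 0 <= B by have := quad_ge0 0; rewrite expr0n /=; lra.
have [A_eq0|A_neq0] := eqVneq A 0.
  rewrite A_eq0 mul0r; have [->|S_neq0] := eqVneq S 0; first by rewrite expr0n.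
  have := quad_ge0 ((B + 1) / (2 * S)); rewrite A_eq0 mulr0 add0r.
  have -> : 2 * ((B + 1) / (2 * S)) * S = B + 1 by field.
  lra.
have A_gt0 : 0 < A by rewrite lt_def A_neq0 A0.
have := quad_ge0 (S / A).
have -> : (S / A) ^+ 2 * A - 2 * (S / A) * S + B = B - S ^+ 2 / A by field.
by rewrite subr_ge0 ler_pdivrMr // mulrC.
Qed.

Lemma cvgn_of_sqr_increments_le (s S : nat -> R) (K : R) : cvgn S ->
  (forall a b, (a <= b)%N -> (s b - s a) ^+ 2 <= K * (S b - S a)) -> cvgn s.
Proof.
move=> cvgS incr_le.
have dist_le a b : `|s a - s b| ^+ 2 <= `|K| * `|S a - S b|.
  wlog ab : a b / (a <= b)%N.
    by move=> H; case/orP: (leq_total a b) => /H //; rewrite distrC (distrC (S a)).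
  rewrite distrC (distrC (S a)) real_normK ?num_real // -normrM.
  exact: le_trans (incr_le a b ab) (ler_norm _).
apply/cauchy_cvgP/cauchy_ballP => e e_gt0; rewrite near_map2.
have d_gt0 : 0 < e ^+ 2 / (`|K| + 1) by rewrite divr_gt0 ?exprn_gt0 // ltr_wpDl.
have cauchyS : cauchy_ball (S @ \oo) by apply/cauchy_ballP; exact: cvg_cauchy.
have := cauchyS _ d_gt0; rewrite near_map2.
apply: filterS => -[a b] /=; rewrite -!ball_normE /= => Sab.
rewrite -(ltr_pXn2r (_ : 0 < 2)%N) ?nnegrE ?normr_ge0 ?(ltW e_gt0) //.
apply: le_lt_trans (dist_le a b) _.
have K1 : 0 < `|K| + 1 by rewrite ltr_wpDl.
have : `|K| * `|S a - S b| <= `|K| * (e ^+ 2 / (`|K| + 1)).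
  by rewrite ler_wpM2l // ltW.
suff : `|K| * (e ^+ 2 / (`|K| + 1)) < e ^+ 2 by lra.
rewrite mulrCA gtr_pMr ?exprn_gt0 // ltr_pdivrMr // mul1r; lra.
Qed.

Section Resonance.
Variable T : nat -> R.
Hypothesis T_ge0 : forall l, 0 <= T l.

Let Q n := 1 + series T n.

Let Q_ge1 n : 1 <= Q n.
Proof. by rewrite /Q lerDl /series sumr_ge0. Qed.

Let QS n : Q n.+1 = Q n + T n.
Proof. by rewrite /Q seriesSr addrA. Qed.

Let Q_nondecreasing : {homo Q : a b / (a <= b)%N >-> a <= b}.
Proof. by move=> a b ab; rewrite lerD2l; apply: nondecreasing_series. Qed.

Let series_resonance_sqr_le1 n : series (fun l => T l * (Q l.+1)^-1 ^+ 2) n <= 1.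
Proof.
(* the terms are bounded by those of the telescoping series of - 1 / Q l *)
have step l : T l * (Q l.+1)^-1 ^+ 2 <= - (Q l.+1)^-1 - - (Q l)^-1.
  have := Q_ge1 l; have := T_ge0 l; rewrite QS => Tl Ql.
  have -> : - (Q l + T l)^-1 - - (Q l)^-1 = T l / (Q l * (Q l + T l)).
    by field; rewrite !gt_eqF //; lra.
  by rewrite exprVn; apply: ler_wpM2l => //; rewrite lef_pV2 ?posrE; nra.
rewrite /series /=; apply: le_trans (ler_sum _ (fun l _ => step l)) _.
rewrite (telescope_sumr (fun k => - (Q k)^-1)) //.
have -> : Q 0 = 1 by rewrite /Q seriesEnat /= big_geq // addr0.
have : 0 <= (Q n)^-1 by rewrite invr_ge0; have := Q_ge1 n; lra.
rewrite invr1; lra.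
Qed.

Let series_resonance_bounded :
  cvgn (series (fun l => T l * (Q l.+1)^-1)) -> exists B, forall n, series T n <= B.
Proof.
set U := series _ => cvgU; apply/not_existsP => unbounded.
have U_nondecreasing : {homo U : a b / (a <= b)%N >-> a <= b}.
  apply: nondecreasing_series => l _ _; rewrite mulr_ge0 // invr_ge0.
  by have := Q_ge1 l.+1; lra.
have U_le := nondecreasing_cvgn_le U_nondecreasing cvgU.
have [n0 _ /(_ n0 (leqnn n0))] : \forall n \near \oo, `|limn U - U n| < 1 / 2.
  by move/cvgrPdist_lt : cvgU; apply; rewrite divr_gt0.
have [n1] : exists n1, 2 * Q n0 < Q n1.
  have /existsNP[n1 /negP] := unbounded (2 * Q n0 - 1).
  by rewrite -ltNge /Q => ?; exists n1; lra.
have Qn0 := Q_ge1 n0; have Qn1 := Q_ge1 n1 => Qn01 U_tail.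
have n01 : (n0 <= n1)%N.
  by rewrite leqNgt; apply/negP => /ltnW/Q_nondecreasing; lra.
(* on [n0, n1) every T l is divided by at most Q n1, which dwarfs Q n0 *)
have : (Q n1 - Q n0) / Q n1 <= U n1 - U n0.
  have -> : Q n1 - Q n0 = series T n1 - series T n0 by rewrite /Q; ring.
  rewrite /U !sub_series_geq // mulr_suml; apply: ler_sum_nat => l /andP[_ ln1].
  apply: ler_wpM2l => //; have := Q_ge1 l.+1 => Ql.
  by rewrite lef_pV2 ?posrE; [exact: Q_nondecreasing | lra | lra].
have : 1 / 2 <= (Q n1 - Q n0) / Q n1 by rewrite ler_pdivlMr; lra.
have := U_le n1; move: U_tail; rewrite ltr_norml => /andP[_]; lra.
Qed.

Lemma series_bounded_of_resonance :
  (forall u : nat -> R, (forall l, 0 <= u l) ->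
     cvgn (series (fun l => T l * u l ^+ 2)) -> cvgn (series (fun l => T l * u l))) ->
  exists B, forall n, series T n <= B.
Proof.
move=> resonance; apply: series_resonance_bounded; apply: resonance.
  by move=> l; rewrite invr_ge0; have := Q_ge1 l.+1; lra.
apply: nondecreasing_is_cvgn.
  by apply: nondecreasing_series => l _ _; rewrite mulr_ge0 ?sqr_ge0.
by exists 1 => _ [n _ <-]; exact: series_resonance_sqr_le1.
Qed.

End Resonance.
End RealSequences.

Lemma integralT_le_bound d (T : measurableType d) (R : realType)
    (mu : {measure set T -> \bar R}) (f : T -> R) (B : R) :
  (forall x, 0 <= f x <= B) -> (\int[mu]_(x in setT) (f x)%:E <= B%:E * mu setT)%E.
Proof.
move=> f_bnd; have B_ge0 : 0 <= B by have /andP[f0 fB] := f_bnd point; exact: le_trans fB.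
rewrite ge0_integralTE => [|x]; last by rewrite lee_fin; case/andP: (f_bnd x).
apply: ge_ereal_sup => _ [h /= h_le <-].
pose b := cst_nnsfun T (NngNum B_ge0).
have := integralT_nnsfun mu b; rewrite /= integral_cst // => intB.
apply: (@le_trans _ _ (sintegral mu b)); last by rewrite intB.
apply: le_sintegral => x /=; have := h_le x; rewrite lee_fin => /le_trans; apply.
by case/andP: (f_bnd x).
Qed.

Lemma sum_nat_trunc (V : zmodType) (f : nat -> V) a b n : (a <= b <= n)%N ->
  \sum_(0 <= l < n) (if (a <= l < b)%N then f l else 0) = \sum_(a <= l < b) f l.
Proof.
case/andP=> ab bn; rewrite (@big_cat_nat _ _ _ a) ?(leq_trans ab) //=.
rewrite (@big_cat_nat _ _ _ b a n) //= big1_seq ?add0r => [|l]; last first.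
  by rewrite mem_index_iota => /andP[_ /andP[_ la]]; rewrite leqNgt la.
rewrite [X in _ + X]big1_seq ?addr0 => [|l]; last first.
  by rewrite mem_index_iota => /andP[_ /andP[bl _]]; rewrite ltnNge bl andbF.
by apply: eq_big_seq => l; rewrite mem_index_iota => ->.
Qed.

Local Open Scope complex_scope.

Section ComplexMatrices.
Variable R : realType.
Local Notation C := R[i].
Implicit Types (x y z : C).

Lemma cnorm2_ge0 z : 0 <= cnorm2 z.
Proof. by rewrite addr_ge0 ?sqr_ge0. Qed.

Lemma cnorm2D x y : cnorm2 (x + y) <= 2 * (cnorm2 x + cnorm2 y).
Proof.
case: x y => a b [c d]; rewrite /cnorm2 /=.
by have := sqr_ge0 (a - c); have := sqr_ge0 (b - d); nra.
Qed.

Lemma cnorm2M x y : cnorm2 (x * y) = cnorm2 x * cnorm2 y.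
Proof. by case: x y => a b [c d]; rewrite /cnorm2 /=; ring. Qed.

Lemma cnorm2J z : cnorm2 z^* = cnorm2 z.
Proof. by case: z => a b; rewrite /cnorm2 /=; ring. Qed.

Lemma cnorm2_real (r : R) : cnorm2 r%:C = r ^+ 2.
Proof. by rewrite /cnorm2 /= expr0n addr0. Qed.

Lemma mulJc z : z^* * z = (cnorm2 z)%:C.
Proof.
by case: z => a b; apply/eqP; rewrite eq_complex /cnorm2 /=; apply/andP; split; apply/eqP; ring.
Qed.

Lemma sqr_normc z : `|z| ^+ 2 = (cnorm2 z)%:C.
Proof. by rewrite normc_def -rmorphXn sqr_sqrtr ?cnorm2_ge0. Qed.

Lemma Re_sum (I : Type) (s : seq I) (F : I -> C) :
  complex.Re (\sum_(i <- s) F i) = \sum_(i <- s) complex.Re (F i).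
Proof. exact: (raddf_sum (@complex.Re R : Rcomplex R -> R)). Qed.

Lemma Re_sqr_le z : complex.Re z ^+ 2 <= cnorm2 z.
Proof. by rewrite lerDl sqr_ge0. Qed.

Lemma Im_sqr_le z : complex.Im z ^+ 2 <= cnorm2 z.
Proof. by rewrite lerDr sqr_ge0. Qed.

Lemma Re_mulNi z : complex.Re (z * - 'i) = complex.Im z.
Proof. by case: z => a b /=; ring. Qed.

Lemma Re_sum_mul_sqr_le (I : finType) (q : I -> R) (x y : I -> C) : (forall i, 0 < q i) ->
  complex.Re (\sum_i x i * y i) ^+ 2 <=
  (\sum_i (q i)^-1 * cnorm2 (x i)) * (\sum_i q i * cnorm2 (y i)).
Proof.
move=> q_gt0; apply: sqr_le_of_quadratic_ge0 => [|t].
  by rewrite sumr_ge0 // => i _; rewrite mulr_ge0 ?cnorm2_ge0 // invr_ge0 ltW.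
(* 0 <= \sum_i |t x_i - q_i (y_i)^*|^2 / q_i is a quadratic polynomial in t *)
have expand i : (q i)^-1 * cnorm2 (t%:C * x i - (q i)%:C * (y i)^*) =
    t ^+ 2 * ((q i)^-1 * cnorm2 (x i)) - 2 * t * complex.Re (x i * y i) + q i * cnorm2 (y i).
  have := q_gt0 i; case: (x i) (y i) => a b [c d]; rewrite /cnorm2 /= => qi.
  by field; rewrite gt_eqF.
have : 0 <= \sum_i (q i)^-1 * cnorm2 (t%:C * x i - (q i)%:C * (y i)^*).
  by rewrite sumr_ge0 // => i _; rewrite mulr_ge0 ?cnorm2_ge0 // invr_ge0 ltW.
under eq_bigr do rewrite expand.
by rewrite !big_split /= sumrN -!mulr_sumr Re_sum.
Qed.

Lemma cnorm2_sum_mul_le (I : finType) (q : I -> R) (x y : I -> C) : (forall i, 0 < q i) ->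
  cnorm2 (\sum_i x i * y i) <=
  2 * ((\sum_i (q i)^-1 * cnorm2 (x i)) * (\sum_i q i * cnorm2 (y i))).
Proof.
move=> q_gt0; have Re_le := Re_sum_mul_sqr_le x y q_gt0.
have cnorm2_Ni i : cnorm2 (y i * - 'i) = cnorm2 (y i) by rewrite cnorm2M /cnorm2 /=; ring.
have := Re_sum_mul_sqr_le x (fun i => y i * - 'i) q_gt0.
have -> : \sum_i x i * (y i * - 'i) = (\sum_i x i * y i) * - 'i.
  by rewrite mulr_suml; apply: eq_bigr => i _; rewrite mulrA.
have -> : \sum_i q i * cnorm2 (y i * - 'i) = \sum_i q i * cnorm2 (y i).
  by apply: eq_bigr => i _; rewrite cnorm2_Ni.
rewrite Re_mulNi => Im_le.
by rewrite /cnorm2; lra.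
Qed.

Lemma frob2_ge0 p q (A : 'M[C]_(p, q)) : 0 <= frob2 A.
Proof. by rewrite sumr_ge0 // => i _; rewrite sumr_ge0 // => j _; exact: cnorm2_ge0. Qed.

Lemma cnorm2_le_frob2 p q (A : 'M[C]_(p, q)) i j : cnorm2 (A i j) <= frob2 A.
Proof.
have entry_ge0 k l : 0 <= cnorm2 (A k l) by exact: cnorm2_ge0.
rewrite /frob2 (bigD1 i) //= (bigD1 j) //= -addrA lerDl addr_ge0 ?sumr_ge0 // => k _.
exact: sumr_ge0.
Qed.

Lemma frob2Z p q z (A : 'M[C]_(p, q)) : frob2 (z *: A) = cnorm2 z * frob2 A.
Proof.
rewrite /frob2 mulr_sumr; apply: eq_bigr => i _; rewrite mulr_sumr.
by apply: eq_bigr => j _; rewrite mxE cnorm2M.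
Qed.

Lemma frob2D p q (A B : 'M[C]_(p, q)) : frob2 (A + B) <= 2 * (frob2 A + frob2 B).
Proof.
rewrite /frob2 -big_split mulr_sumr; apply: ler_sum => i _.
by rewrite -big_split mulr_sumr; apply: ler_sum => j _; rewrite mxE cnorm2D.
Qed.

Lemma frob2_sum_le p q (I : finType) (F : I -> 'M[C]_(p, q)) :
  frob2 (\sum_i F i) <= 2 ^+ #|I| * \sum_i frob2 (F i).
Proof.
rewrite -!big_enum cardE /=; elim: (enum I) => [|i s IH].
  rewrite !big_nil mulr0 /frob2 big1 // => k _.
  by rewrite big1 // => l _; rewrite mxE cnorm2_real expr0n.
rewrite !big_cons /= exprS -mulrA; apply: le_trans (frob2D _ _) _.
rewrite ler_pM2l // mulrDr lerD // ler_peMl ?frob2_ge0 // exprn_ege1 // ler1n //.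
Qed.

Lemma frob2_1 N : frob2 (1%:M : 'M[C]_N) = N%:R.
Proof.
rewrite -[N in RHS]card_ord -sumr_const; apply: eq_bigr => i _.
rewrite (bigD1 i) //= big1 ?mxE ?eqxx ?cnorm2_real ?expr1n ?addr0 // => j /negbTE ji.
by rewrite mxE eq_sym ji cnorm2_real expr0n.
Qed.

Lemma frob2_col_mx p1 p2 q (A : 'M[C]_(p1, q)) (B : 'M[C]_(p2, q)) :
  frob2 (col_mx A B) = frob2 A + frob2 B.
Proof.
rewrite /frob2 big_split_ord /=; congr (_ + _); apply: eq_bigr => i _.
  by apply: eq_bigr => j _; rewrite col_mxEu.
by apply: eq_bigr => j _; rewrite col_mxEd.
Qed.

Lemma frob2_cols p q (A : 'M[C]_(p, q)) : frob2 A = \sum_j frob2 (col j A).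
Proof.
rewrite /frob2 exchange_big; apply: eq_bigr => j _; apply: eq_bigr => i _.
by rewrite big_ord1 mxE.
Qed.

Lemma vnorm2E N (v : 'cV[C]_N) : vnorm2 v = (frob2 v)%:C.
Proof.
by rewrite /vnorm2 rmorph_sum; apply: eq_bigr => i _; rewrite big_ord1 sqr_normc.
Qed.

Lemma adjM p q r (A : 'M[C]_(p, q)) (B : 'M[C]_(q, r)) : adj (A *m B) = adj B *m adj A.
Proof.
rewrite /adj -trmx_mul; congr (_^T); apply/matrixP => i j; rewrite !mxE rmorph_sum.
by apply: eq_bigr => k _; rewrite !mxE rmorphM.
Qed.

Lemma adj_mul_vnorm2 N (v : 'cV[C]_N) : (adj v *m v) 0 0 = vnorm2 v.
Proof.
rewrite vnorm2E mxE rmorph_sum; apply: eq_bigr => i _.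
by rewrite big_ord1 /adj !mxE mulJc.
Qed.

Lemma Re_trace_adj_mul N (A : 'M[C]_N) : complex.Re (\tr (adj A *m A)) = frob2 A.
Proof.
rewrite /mxtrace Re_sum /frob2 exchange_big; apply: eq_bigr => i _.
rewrite mxE Re_sum; apply: eq_bigr => j _.
by rewrite /adj !mxE mulJc.
Qed.

Definition contractive_mx N (Y : 'M[C]_N) := forall v : 'cV[C]_N, vnorm2 (Y *m v) <= vnorm2 v.

Lemma frob2_mulmx_contractive N q (Y : 'M[C]_N) (A : 'M[C]_(N, q)) :
  contractive_mx Y -> frob2 (Y *m A) <= frob2 A.
Proof.
move=> contrY; rewrite !frob2_cols; apply: ler_sum => j _.
by rewrite -lecR -!vnorm2E !colE -mulmxA.
Qed.

End ComplexMatrices.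

Section NcFunctions.
Variables (R : realType) (m : nat).
Local Notation C := R[i].
Local Notation mxt N := (mxt R m N).

Lemma sum_ord_tuple (V : nmodType) n (g : forall l : nat, l.-tuple 'I_m -> V) :
  \sum_(l < n) \sum_(w : l.-tuple 'I_m) g l w =
  \sum_(lw : {l : 'I_n & l.-tuple 'I_m}) g (tag lw) (tagged lw).
Proof. exact: sig_big_dep. Qed.

Implicit Types c : seq 'I_m -> C.

Lemma psum_series N (X : mxt N) c n : psum c X n = series (hompart c X) n.
Proof. by rewrite /psum seriesEnat /= big_mkord. Qed.

Lemma psum_entry N (X : mxt N) c n i j :
  psum c X n i j = \sum_(l < n) \sum_(w : l.-tuple 'I_m) c w * mono X w i j.
Proof.
rewrite /psum summxE; apply: eq_bigr => l _; rewrite /hompart summxE.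
by apply: eq_bigr => w _; rewrite mxE.
Qed.

Definition block_tuple N M (X : mxt N) (Y : mxt M) : mxt (N + M) :=
  [ffun j => block_mx (X j) 0 0 (Y j)].

Definition conj_tuple N (S : 'M[C]_N) (X : mxt N) : mxt N :=
  [ffun j => S *m X j *m invmx S].

Lemma mono_block N M (X : mxt N) (Y : mxt M) w :
  mono (block_tuple X Y) w = block_mx (mono X w) 0 0 (mono Y w).
Proof.
elim: w => [|j w IH] /=; first by rewrite -scalar_mx_block.
by rewrite IH ffunE mulmx_block !mulmx0 !mul0mx !addr0 !add0r.
Qed.

Lemma psum_block N M (X : mxt N) (Y : mxt M) c n :
  psum c (block_tuple X Y) n = block_mx (psum c X n) 0 0 (psum c Y n).
Proof.
have sum_block I (r : seq I) p q (F : I -> 'M[C]_p) (G : I -> 'M[C]_q) :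
    \sum_(i <- r) block_mx (F i) 0 0 (G i) =
    block_mx (\sum_(i <- r) F i) 0 0 (\sum_(i <- r) G i).
  elim: r => [|x r IH]; first by rewrite !big_nil block_mx0.
  by rewrite !big_cons IH add_block_mx !addr0.
rewrite /psum -sum_block; apply: eq_bigr => l _; rewrite /hompart -sum_block.
by apply: eq_bigr => w _; rewrite mono_block scale_block_mx !scaler0.
Qed.

Lemma mono_conj N (S : 'M[C]_N) (X : mxt N) w : S \in unitmx ->
  mono (conj_tuple S X) w = S *m mono X w *m invmx S.
Proof.
move=> S_unit; elim: w => [|j w IH] /=; first by rewrite mulmx1 mulmxV.
by rewrite IH ffunE !mulmxA mulmxKV.
Qed.

Lemma psum_conj N (S : 'M[C]_N) (X : mxt N) c n : S \in unitmx ->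
  psum c (conj_tuple S X) n = S *m psum c X n *m invmx S.
Proof.
move=> S_unit; rewrite /psum mulmx_sumr mulmx_suml; apply: eq_bigr => l _.
rewrite /hompart mulmx_sumr mulmx_suml; apply: eq_bigr => w _.
by rewrite mono_conj // -scalemxAr -scalemxAl.
Qed.

Definition contractive_tuple N (X : mxt N) := forall j, contractive_mx (X j).

Lemma contractive_tuple_block N M (X : mxt N) (Y : mxt M) :
  contractive_tuple X -> contractive_tuple Y -> contractive_tuple (block_tuple X Y).
Proof.
move=> contrX contrY j v; rewrite ffunE -(vsubmxK v) mul_block_col !mul0mx addr0 add0r.
have := contrX j (usubmx v); have := contrY j (dsubmx v).
by rewrite !vnorm2E !lecR !frob2_col_mx => leY leX; exact: lerD.
Qed.

Lemma frob2_mono_contractive N (X : mxt N) w : contractive_tuple X -> frob2 (mono X w) <= N%:R.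
Proof.
move=> contrX; elim: w => [|j w IH] /=; first by rewrite frob2_1.
exact: le_trans (frob2_mulmx_contractive _ (contrX j)) IH.
Qed.

Lemma ncpolydisc_contractive N (X : mxt N) : @ncpolydisc R m N X -> contractive_tuple X.
Proof.
move=> X_in j v; have [k [k_lt1 Xv_le]] := X_in j; apply: le_trans (Xv_le v) _.
by rewrite ler_piMl ?(ltW k_lt1) // vnorm2E ler0c frob2_ge0.
Qed.

Lemma ncball_contractive N (X : mxt N) : @ncball R m N X -> contractive_tuple X.
Proof.
move=> X_in j v; have [->|v_neq0] := eqVneq v 0; first by rewrite mulmx0.
have := X_in v v_neq0.
have -> : adj v *m (1%:M - \sum_i adj (X i) *m X i) *m v =
          adj v *m v - \sum_i adj (X i *m v) *m (X i *m v).
  rewrite mulmxBr mulmx1 mulmxBl mulmx_sumr mulmx_suml; congr (_ - _).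
  by apply: eq_bigr => i _; rewrite adjM !mulmxA.
rewrite [in X in _ < X]mxE [in X in _ < _ + X]mxE summxE adj_mul_vnorm2.
under eq_bigr do rewrite adj_mul_vnorm2 vnorm2E.
rewrite vnorm2E -rmorph_sum -rmorphB ltcR subr_gt0 vnorm2E lecR => /ltW.
by apply: le_trans; rewrite (bigD1 j) //= lerDl sumr_ge0 // => i _; exact: frob2_ge0.
Qed.

Lemma psum_contractive_bounded c n :
  exists K, forall N (X : mxt N), contractive_tuple X -> frob2 (psum c X n) <= K * N%:R.
Proof.
exists (2 ^+ n * \sum_(l < n) 2 ^+ #|{: l.-tuple 'I_m}| * \sum_(w : l.-tuple 'I_m) cnorm2 (c w)).
move=> N X contrX; apply: le_trans (frob2_sum_le _) _.
rewrite card_ord -mulrA ler_pM2l ?exprn_gt0 // mulr_suml; apply: ler_sum => l _.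
apply: le_trans (frob2_sum_le _) _; rewrite -mulrA ler_pM2l ?exprn_gt0 // mulr_suml.
apply: ler_sum => w _; rewrite frob2Z ler_wpM2l ?cnorm2_ge0 //.
exact: frob2_mono_contractive.
Qed.

Definition trunc_coef (a b : nat) c (w : seq 'I_m) : C :=
  if (a <= size w < b)%N then c w else 0.

Lemma hompart_trunc N (X : mxt N) a b c l :
  hompart (trunc_coef a b c) X l = if (a <= l < b)%N then hompart c X l else 0.
Proof.
rewrite /hompart /trunc_coef; case: ifP => l_ab.
  by apply: eq_bigr => w _; rewrite size_tuple l_ab.
by rewrite big1 // => w _; rewrite size_tuple l_ab scale0r.
Qed.

Lemma wnorm_term_trunc p a b c l :
  wnorm_term p (trunc_coef a b c) l = if (a <= l < b)%N then wnorm_term p c l else 0.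
Proof.
rewrite /wnorm_term /trunc_coef; case: ifP => l_ab.
  by apply: eq_bigr => w _; rewrite size_tuple l_ab.
by rewrite big1 // => w _; rewrite size_tuple l_ab cnorm2_real expr0n mulr0.
Qed.

Lemma wnorm_term_ge0 p c l : 0 < p -> 0 <= wnorm_term p c l.
Proof.
move=> p_gt0; rewrite sumr_ge0 // => w _.
by rewrite mulr_ge0 ?cnorm2_ge0 // invr_ge0 exprn_ge0 // ltW.
Qed.

Lemma psum_trunc N (X : mxt N) a b c : (a <= b)%N ->
  psum (trunc_coef a b c) X b = psum c X b - psum c X a.
Proof.
move=> ab; rewrite !psum_series sub_series_geq // seriesEnat /=.
under eq_bigr do rewrite hompart_trunc.
by rewrite sum_nat_trunc // ab leqnn.
Qed.

Lemma psum_trunc_stable N (X : mxt N) a b c n : (b <= n)%N ->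
  psum (trunc_coef a b c) X n = psum (trunc_coef a b c) X b.
Proof.
move=> bn; rewrite !psum_series -[LHS](subrK (series (hompart (trunc_coef a b c) X) b)).
rewrite sub_series_geq // big1_seq ?add0r // => l /andP[_].
by rewrite mem_index_iota hompart_trunc => /andP[bl _]; rewrite ltnNge bl andbF.
Qed.

Lemma series_wnorm_trunc_le p a b c n : 0 < p -> (a <= b)%N ->
  series (wnorm_term p (trunc_coef a b c)) n <=
  series (wnorm_term p c) b - series (wnorm_term p c) a.
Proof.
move=> p_gt0 ab; apply: (@le_trans _ _ (series (wnorm_term p (trunc_coef a b c)) (n + b))).
  by apply: nondecreasing_series => [l _ _|]; rewrite ?wnorm_term_ge0 ?leq_addr.
rewrite sub_series_geq // seriesEnat /=.
under eq_bigr do rewrite wnorm_term_trunc.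
by rewrite sum_nat_trunc ?ab ?leq_addl.
Qed.

(* Extended by 0 off the contractive tuples, so that it is bounded by a multiple of N at
   every level N, which puts it in every H^2(Om) with Om made of contractive tuples. *)
Definition trunc_poly a b c : forall N, mxt N -> 'M[C]_N :=
  fun N X => if `[< contractive_tuple X >] then psum (trunc_coef a b c) X b else 0.

Section TruncPoly.
Variable Om : forall N, set (mxt N).
Arguments Om N : clear implicits.
Hypothesis Om_contractive : forall N (X : mxt N), Om N X -> contractive_tuple X.

Lemma trunc_poly_TTcoeff a b c : TTcoeff Om (trunc_poly a b c) (trunc_coef a b c).
Proof.
move=> N X X_in i j; rewrite /trunc_poly asboolT; last exact: Om_contractive.
by split; apply: cvg_near_cst; exists b => // n /= bn; rewrite psum_trunc_stable.
Qed.

Lemma trunc_poly_ncfun a b c : ncfun Om (trunc_poly a b c).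
Proof.
split=> [N M X Y /Om_contractive cX /Om_contractive cY |
          N X S S_unit /Om_contractive cX /Om_contractive cSX].
  have cXY : contractive_tuple (block_tuple X Y) by exact: contractive_tuple_block.
  by rewrite /trunc_poly !asboolT //; exact: psum_block.
by rewrite /trunc_poly !asboolT //; exact: psum_conj.
Qed.

Lemma trunc_poly_bounded a b c :
  exists K, forall N (X : mxt N), frob2 (trunc_poly a b c X) <= K * N%:R.
Proof.
have [K K_bnd] := psum_contractive_bounded (trunc_coef a b c) b.
exists `|K| => N X; rewrite /trunc_poly; case: asboolP => [/K_bnd|_].
  by move/le_trans; apply; rewrite ler_wpM2r ?ler_norm.
rewrite /frob2 big1 ?mulr_ge0 // => i _.
by rewrite big1 // => j _; rewrite mxE cnorm2_real expr0n.
Qed.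

Lemma trunc_poly_inH2 (om : forall N, {measure set (mesT R m N) -> \bar R}) a b c :
  (forall N, om N setT = 1%E) -> inH2 Om om (trunc_poly a b c).
Proof.
move=> om1; have [K K_bnd] := trunc_poly_bounded a b c.
split; first split; first exact: trunc_poly_ncfun.
  by move=> N X Z _; exists 1; split=> //; exists (K * N%:R) => *; exact: K_bnd.
exists K => N N_gt0 r _; rewrite -[K%:E]mule1 -(om1 N).
apply: integralT_le_bound => X; rewrite Re_trace_adj_mul mulr_ge0 ?invr_ge0 ?frob2_ge0 //=.
by rewrite ler_pdivrMl ?ltr0n // mulrC.
Qed.

End TruncPoly.

Lemma cvg_set_of_Bset (Om : forall N, set (mxt N))
    (om : forall N, {measure set (mesT R m N) -> \bar R}) p N (X : mxt N) :
  0 < p -> (forall N (X : mxt N), Om N X -> contractive_tuple X) ->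
  (forall N, om N setT = 1%E) -> Bset Om om p X -> cvg_set Om p X.
Proof.
move=> p_gt0 Om_contr om1 [X_in [K K_bnd]]; split=> // c c_l2.
set S := series (wnorm_term p c).
have incr_le a b : (a <= b)%N -> frob2 (psum c X b - psum c X a) <= `|K| * (S b - S a).
  move=> ab; apply: (@le_trans _ _ (K * (S b - S a))).
    have := K_bnd _ _ (trunc_poly_inH2 Om_contr a b c om1) (trunc_poly_TTcoeff Om_contr a b c)
      _ (fun n => series_wnorm_trunc_le c n p_gt0 ab).
    by rewrite /trunc_poly asboolT ?psum_trunc //; exact: Om_contr X_in.
  rewrite ler_wpM2r ?ler_norm // subr_ge0.
  by apply: nondecreasing_series => // l _ _; exact: wnorm_term_ge0.
have entry_cvg (F : C -> R) : (forall x y, F (x - y) = F x - F y) ->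
    (forall x, F x ^+ 2 <= cnorm2 x) -> forall i j, cvgn (fun n => F (psum c X n i j)).
  move=> FB F_le i j; apply: (cvgn_of_sqr_increments_le (S := S) (K := `|K|)) => // a b ab.
  rewrite -FB; have -> : psum c X b i j - psum c X a i j = (psum c X b - psum c X a) i j.
    by rewrite !mxE.
  exact: le_trans (F_le _) (le_trans (cnorm2_le_frob2 _ i j) (incr_le a b ab)).
have ReB x y : complex.Re (x - y) = complex.Re x - complex.Re y by case: x y => ? ? [].
have ImB x y : complex.Im (x - y) = complex.Im x - complex.Im y by case: x y => ? ? [].
exists (\matrix_(i, j) (limn (fun n => complex.Re (psum c X n i j)) +i*
                        limn (fun n => complex.Im (psum c X n i j)))).
by move=> i j; rewrite mxE; split; apply: entry_cvg => //; [exact: Re_sqr_le | exact: Im_sqr_le].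
Qed.

(* The series of these terms is the squared norm of the functional f |-> f(X)_ij on the
   weighted space l^2_p, i.e. the diagonal of the reproducing kernel of H^2. *)
Definition kernel_term p N (X : mxt N) i j l : R :=
  \sum_(w : l.-tuple 'I_m) p ^+ l * cnorm2 (mono X w i j).

Lemma kernel_term_ge0 p N (X : mxt N) i j l : 0 < p -> 0 <= kernel_term p X i j l.
Proof.
by move=> p_gt0; rewrite sumr_ge0 // => w _; rewrite mulr_ge0 ?cnorm2_ge0 ?exprn_ge0 ?ltW.
Qed.

Lemma cnorm2_psum_entry_le p N (X : mxt N) c n i j : 0 < p ->
  cnorm2 (psum c X n i j) <=
  2 * (series (wnorm_term p c) n * series (kernel_term p X i j) n).
Proof.
move=> p_gt0; rewrite psum_entry (sum_ord_tuple _ (fun l w => c w * mono X w i j)).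
have q_gt0 (lw : {l : 'I_n & l.-tuple 'I_m}) : 0 < p ^+ tag lw by exact: exprn_gt0.
apply: le_trans (cnorm2_sum_mul_le (fun lw : {l : 'I_n & l.-tuple 'I_m} => c (tagged lw))
  (fun lw => mono X (tagged lw) i j) q_gt0) _.
rewrite !seriesEnat /= !big_mkord /wnorm_term /kernel_term.
rewrite (sum_ord_tuple _ (fun l w => p ^- l * cnorm2 (c w))).
by rewrite (sum_ord_tuple _ (fun l w => p ^+ l * cnorm2 (mono X w i j))).
Qed.

Lemma kernel_series_bounded (Om : forall N, set (mxt N)) p N (X : mxt N) i j :
  0 < p -> cvg_set Om p X -> exists B, forall n, series (kernel_term p X i j) n <= B.
Proof.
move=> p_gt0 [_ X_cvg]; apply: series_bounded_of_resonance => [l|u u_ge0 cvg_u2].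
  exact: kernel_term_ge0.
(* chosen so that c_w (X^w)_ij = p^|w| u_|w| |(X^w)_ij|^2 *)
pose c w := (p ^+ size w * u (size w))%:C * (mono X w i j)^*.
have wnormE : (fun l => kernel_term p X i j l * u l ^+ 2) = wnorm_term p c.
  apply: funext => l; rewrite /wnorm_term /kernel_term mulr_suml; apply: eq_bigr => w _.
  rewrite /c size_tuple cnorm2M cnorm2_real cnorm2J.
  by field; rewrite expf_neq0 // gt_eqF.
rewrite wnormE in cvg_u2; have [L /(_ i j) [Re_cvg _]] := X_cvg c cvg_u2.
suff -> : series (fun l => kernel_term p X i j l * u l) =
          (fun n => complex.Re (psum c X n i j)) by exact: cvgP Re_cvg.
apply: funext => n; rewrite psum_entry seriesEnat /= big_mkord Re_sum.
apply: eq_bigr => l _; rewrite Re_sum /kernel_term mulr_suml; apply: eq_bigr => w _.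
by rewrite /c size_tuple -[in RHS]mulrA mulJc -rmorphM /=; ring.
Qed.

Lemma Bset_of_cvg_set (Om : forall N, set (mxt N))
    (om : forall N, {measure set (mesT R m N) -> \bar R}) p N (X : mxt N) :
  0 < p -> cvg_set Om p X -> Bset Om om p X.
Proof.
move=> p_gt0 X_cvg; split; first by case: X_cvg.
have /boolp.choice[B B_bnd] : forall ij : 'I_N * 'I_N,
    exists B, forall n, series (kernel_term p X ij.1 ij.2) n <= B.
  by case=> i j; exact: kernel_series_bounded X_cvg.
exists (2 * \sum_i \sum_j B (i, j)) => f c _ f_TT M M_bnd.
have M_ge0 : 0 <= M by apply: le_trans (M_bnd 0%N); rewrite seriesEnat /= big_geq.
rewrite /frob2 mulr_sumr mulr_suml; apply: ler_sum => i _.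
rewrite mulr_sumr mulr_suml; apply: ler_sum => j _.
have [Re_cvg Im_cvg] := f_TT N X X_cvg.1 i j.
have cnorm2_cvg : (fun n => cnorm2 (psum c X n i j)) @ \oo --> cnorm2 (f N X i j).
  by apply: cvgD; rewrite expr2; under eq_fun do rewrite expr2; exact: cvgM.
apply: (closed_cvg _ (@closed_le _ (2 * B (i, j) * M)) _ _ cnorm2_cvg).
apply: nearW => n /=.
apply: le_trans (cnorm2_psum_entry_le X c n i j p_gt0) _.
rewrite -mulrA ler_pM2l // mulrC ler_pM //.
- by rewrite seriesEnat sumr_ge0 // => l _; exact: kernel_term_ge0.
- by rewrite seriesEnat sumr_ge0 // => l _; exact: wnorm_term_ge0.
- exact: B_bnd (i, j) n.
Qed.

End NcFunctions.

Lemma not_is_sphere_inv0 (R : realType) (nu : forall N, {measure set (mesT R 0 N) -> \bar R}) :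
  ~ is_sphere_inv nu.
Proof.
move=> /(_ 1%N) [_ [+ _]].
have -> : @sphere R 0 1 = set0.
  apply/seteqP; split=> // X; rewrite /sphere /= big_ord0 => /matrixP /(_ 0 0).
  by rewrite !mxE => /eqP; rewrite eq_sym oner_eq0.
by rewrite measure0 => -[] /esym /eqP; rewrite oner_eq0.
Qed.

Unset Implicit Arguments.

Theorem proposition3p8 (R : realType) (m : nat)
    (mu nu : forall N : nat, {measure set (mesT R m N) -> \bar R}) :
  is_torus_haar mu -> is_sphere_inv nu ->
  (forall (N : nat) (X : mxt R m N),
     Bset (@ncpolydisc R m) mu 1 X <-> cvg_set (@ncpolydisc R m) 1 X) /\
  (forall (N : nat) (X : mxt R m N),
     Bset (@ncball R m) nu m%:R X <-> cvg_set (@ncball R m) m%:R X).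
Proof.
move=> mu_haar nu_inv.
have mu1 N : mu N setT = 1%E by case: (mu_haar N).
have nu1 N : nu N setT = 1%E by case: (nu_inv N).
have m_gt0 : (0 : R) < m%:R.
  by rewrite ltr0n; case: m mu nu mu_haar nu_inv {mu1 nu1} => // mu nu _ /not_is_sphere_inv0.
split=> N X; split.
- exact: cvg_set_of_Bset ltr01 (@ncpolydisc_contractive R m) mu1.
- exact: Bset_of_cvg_set ltr01.
- exact: cvg_set_of_Bset m_gt0 (@ncball_contractive R m) nu1.
- exact: Bset_of_cvg_set m_gt0.
Qed.
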